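(* Let $-1\le\alpha\le1$ and $C=1-\log 2$. For every $N\ge1$ and every set $\omega\subset\mathbb{R}\times(-\pi,\pi]$ with $|\omega|=N$, $$\sum_{\substack{z,z'\in\omega\\ z\ne z'}}W_\alpha(z-z')\ \ge\ -N(\log N+C).$$
   Context: For $-1\le\alpha\le1$ and $(x,y)\in\mathbb{R}^2$ with $\cosh x-\cos y>0$, define $$W_\alpha(x,y)=\frac12\left[\frac{\alpha\,x\sinh x}{\cosh x-\cos y}-\log\big(2(\cosh x-\cos y)\big)+(1-\alpha)|x|\right].$$ For distinct $z,z'\in\mathbb{R}\times(-\pi,\pi]$ the difference $z-z'$ lies in the domain of $W_\alpha$. *)

From Stdlib Require Import Reals List.
Import ListNotations.
Open Scope R_scope.

Definition W (alpha x y : R) : R :=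
  / 2 * (alpha * x * sinh x / (cosh x - cos y)
         - ln (2 * (cosh x - cos y))
         + (1 - alpha) * Rabs x).

Definition Wpt (alpha : R) (z z' : R * R) : R :=
  W alpha (fst z - fst z') (snd z - snd z').

Definition in_strip (z : R * R) : Prop := - PI < snd z /\ snd z <= PI.

Definition pair_sum (alpha : R) (w : list (R * R)) : R :=
  fold_right Rplus 0
    (map (fun z => fold_right Rplus 0
       (map (fun z' => Wpt alpha z z')
          (filter (fun z' => if Req_EM_T (fst z) (fst z') then
                                if Req_EM_T (snd z) (snd z') then false else true
                              else true) w))) w).

(* Write r = e^{-|x|}, c = cos y and w = r e^{iy}. Then W_alpha(x, y) is the
   value at s = 1 of
     h(s) = Re (- log (1 - s w) + alpha |x| s w / (1 - s w))
          = sum_k s^k r^k (1/k + alpha |x|) cos (k y),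
   whose s-derivative has coefficients s^(k-1) r^k (1 + alpha |x| k) cos (k y).
   Summed over all pairs of points, each coefficient is a nonnegative quadratic
   form, because u |-> (1 + alpha u) e^{-u} is a positive definite kernel on the
   line for |alpha| <= 1 (proved by sweeping the points from left to right with
   a Lyapunov function of the first two exponential moments).  Hence the sum of
   h(s) over all pairs, diagonal included, is nonnegative for 0 <= s < 1, and
   each diagonal term equals - ln (1 - s).  On the other hand
   h(1) >= h(s) + ln ((1 + s) / 2) for each pair of distinct points, an
   explicit polynomial inequality.  So the energy is at least
   N ln (1 - s) + N (N - 1) ln ((1 + s) / 2), and s = 1 - 2/N gives the bound. *)

From Coquelicot Require Import Coquelicot.
From Stdlib Require Import Reals Lra Lia Psatz List Permutation Arith.
Open Scope R_scope.

Section ListSum.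
Context {A : Type}.

Definition lsum (f : A -> R) (l : list A) : R :=
  fold_right (fun a acc => f a + acc) 0 l.

Lemma lsum_cons f a l : lsum f (a :: l) = f a + lsum f l.
Proof. reflexivity. Qed.

Lemma fold_right_Rplus_map f l : fold_right Rplus 0 (map f l) = lsum f l.
Proof. induction l as [|a l IH]; simpl; rewrite ?IH; reflexivity. Qed.

Lemma lsum_perm f l l' : Permutation l l' -> lsum f l = lsum f l'.
Proof. induction 1; simpl; lra. Qed.

Lemma lsum_ext f g l : (forall a, In a l -> f a = g a) -> lsum f l = lsum g l.
Proof.
  induction l as [|a l IH]; intros H; simpl; auto.
  rewrite H, IH; auto with datatypes.
Qed.

Lemma lsum_le f g l : (forall a, In a l -> f a <= g a) -> lsum f l <= lsum g l.
Proof.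
  induction l as [|a l IH]; intros H; simpl; [lra|].
  apply Rplus_le_compat; auto with datatypes.
Qed.

Lemma lsum_nonneg f l : (forall a, In a l -> 0 <= f a) -> 0 <= lsum f l.
Proof.
  induction l as [|a l IH]; intros H; simpl; [lra|].
  apply Rplus_le_le_0_compat; auto with datatypes.
Qed.

Lemma lsum_plus f g l : lsum (fun a => f a + g a) l = lsum f l + lsum g l.
Proof. induction l; unfold lsum in *; simpl; lra. Qed.

Lemma lsum_minus f g l : lsum (fun a => f a - g a) l = lsum f l - lsum g l.
Proof. induction l; unfold lsum in *; simpl; lra. Qed.

Lemma lsum_scal k f l : lsum (fun a => k * f a) l = k * lsum f l.
Proof. induction l; unfold lsum in *; simpl; lra. Qed.

Lemma lsum_const k l : lsum (fun _ => k) l = INR (length l) * k.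
Proof. induction l; unfold lsum in *; simpl length; rewrite ?S_INR; simpl; lra. Qed.

End ListSum.

Lemma le_of_is_derive_nonneg f f' a b : a <= b ->
  (forall x, a <= x <= b -> is_derive f x (f' x)) ->
  (forall x, a <= x <= b -> 0 <= f' x) -> f a <= f b.
Proof.
  intros Hab Hd Hpos.
  destruct (MVT_gen f a b f') as [x [Hx Heq]].
  - intros x Hx. apply Hd. rewrite Rmin_left, Rmax_right in Hx; lra.
  - intros x Hx. rewrite Rmin_left, Rmax_right in Hx by lra.
    apply derivable_continuous_pt, ex_derive_Reals_0. eexists. apply Hd; exact Hx.
  - rewrite Rmin_left, Rmax_right in Hx by lra.
    assert (0 <= f' x * (b - a)) by (apply Rmult_le_pos; [apply Hpos|]; lra).
    lra.
Qed.

Definition lyap (al S T : R) := S ^ 2 + 2 * al * S * T + 2 * Rabs al * T ^ 2.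

Lemma lyap_nonneg al S T : -1 <= al <= 1 -> 0 <= lyap al S T.
Proof.
  intros Hal. unfold lyap.
  assert (al ^ 2 <= Rabs al) by (unfold Rabs; destruct Rcase_abs; nra).
  pose proof (Rabs_pos al).
  assert (0 <= (S + al * T) ^ 2) by apply pow2_ge_0.
  assert (0 <= (2 * Rabs al - al ^ 2) * T ^ 2) by (apply Rmult_le_pos; [lra|apply pow2_ge_0]).
  nra.
Qed.

(* The flow (S, T) -> (e^{-d} S, e^{-d} (T + d S)) is how the two moments of a
   configuration evolve when the observation point moves right by d. *)
Lemma lyap_flow_le al S T d : -1 <= al <= 1 -> 0 <= d ->
  lyap al (exp (- d) * S) (exp (- d) * (T + d * S)) <= lyap al S T.
Proof.
  intros Hal Hd.
  set (phi u := exp (- (2 * u)) * (S ^ 2 + 2 * al * S * (T + u * S) + 2 * Rabs al * (T + u * S) ^ 2)).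
  assert (E1 : lyap al (exp (- d) * S) (exp (- d) * (T + d * S)) = phi d).
  { unfold phi, lyap. replace (- (2 * d)) with (- d + - d) by ring. rewrite exp_plus. ring. }
  assert (E0 : lyap al S T = phi 0).
  { unfold phi, lyap. rewrite Rmult_0_r, Ropp_0, exp_0. ring. }
  rewrite E1, E0.
  set (q u := (2 - 2 * al) * S ^ 2 + (4 * al - 4 * Rabs al) * S * (T + u * S) + 4 * Rabs al * (T + u * S) ^ 2).
  enough (- phi 0 <= - phi d) by lra.
  apply (le_of_is_derive_nonneg (fun u => - phi u) (fun u => exp (- (2 * u)) * q u)); auto.
  - intros x _. unfold phi, q. auto_derive; auto. ring.
  - intros x _. apply Rmult_le_pos; [apply Rlt_le, exp_pos|]. unfold q.
    set (U := T + x * S).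
    assert (0 <= (U - S) ^ 2) by apply pow2_ge_0.
    assert (0 <= S ^ 2) by apply pow2_ge_0.
    assert (0 <= U ^ 2) by apply pow2_ge_0.
    unfold Rabs; destruct Rcase_abs; [|nra].
    replace ((2 - 2 * al) * S ^ 2 + (4 * al - 4 * - al) * S * U + 4 * - al * U ^ 2)
      with ((2 + 2 * al) * S ^ 2 - 4 * al * (U - S) ^ 2) by ring.
    nra.
Qed.

Definition kern (al u : R) := (1 + al * u) * exp (- u).

(* Positive definiteness of [u |-> kern al (|u|)] on the line: for weights [c]
   at positions [t], the quadratic form is bounded below by [lyap] of the
   moments [mass] and [moment] seen from any point right of all positions. *)
Section KernelForm.
Context {A : Type} (t c : A -> R) (al : R).
Hypothesis Hal : -1 <= al <= 1.

Definition kform (L : list A) :=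
  lsum (fun a => lsum (fun b => c a * c b * kern al (Rabs (t a - t b))) L) L.
Definition mass (L : list A) tau := lsum (fun a => c a * exp (- (tau - t a))) L.
Definition moment (L : list A) tau :=
  lsum (fun a => c a * (tau - t a) * exp (- (tau - t a))) L.

Lemma kform_perm L L' : Permutation L L' -> kform L = kform L'.
Proof.
  intros P. unfold kform. rewrite (lsum_perm _ _ _ P).
  apply lsum_ext. intros a _. apply lsum_perm, P.
Qed.

Lemma kform_cons m L : kform (m :: L) =
  c m ^ 2 + 2 * c m * lsum (fun b => c b * kern al (Rabs (t m - t b))) L + kform L.
Proof.
  unfold kform. rewrite !lsum_cons.
  set (X := lsum (fun b => c b * kern al (Rabs (t m - t b))) L).
  set (Q := lsum (fun a => lsum (fun b => c a * c b * kern al (Rabs (t a - t b))) L) L).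
  assert (Hrow : lsum (fun b => c m * c b * kern al (Rabs (t m - t b))) L = c m * X)
    by (unfold X; rewrite <- lsum_scal; apply lsum_ext; intros; ring).
  assert (Hcol : lsum (fun a => lsum (fun b => c a * c b * kern al (Rabs (t a - t b))) (m :: L)) L
                 = c m * X + Q).
  { unfold X, Q. rewrite <- lsum_scal, <- lsum_plus. apply lsum_ext. intros a _.
    rewrite lsum_cons, Rabs_minus_sym. ring. }
  rewrite Hrow, Hcol. unfold kern. rewrite Rminus_diag, Rabs_R0, Ropp_0, exp_0. ring.
Qed.

Lemma mass_shift L tau d : mass L (tau + d) = exp (- d) * mass L tau.
Proof.
  unfold mass. rewrite <- lsum_scal. apply lsum_ext. intros a _.
  replace (- (tau + d - t a)) with (- d + - (tau - t a)) by ring. rewrite exp_plus. ring.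
Qed.

Lemma moment_shift L tau d :
  moment L (tau + d) = exp (- d) * (moment L tau + d * mass L tau).
Proof.
  unfold moment, mass. rewrite <- lsum_scal, <- lsum_plus, <- lsum_scal.
  apply lsum_ext. intros a _.
  replace (- (tau + d - t a)) with (- d + - (tau - t a)) by ring. rewrite exp_plus. ring.
Qed.

Lemma perm_max (L : list A) : L <> nil ->
  exists m rest, Permutation L (m :: rest) /\ forall r, In r rest -> t r <= t m.
Proof.
  induction L as [|a L IH]; intros H; [congruence|].
  destruct L as [|b L'].
  - exists a, nil. split; [auto|]. intros r [].
  - destruct IH as [m [rest [P Hm]]]; [discriminate|].
    destruct (Rle_dec (t a) (t m)) as [Hle|Hle].
    + exists m, (a :: rest). split.
      * eapply perm_trans; [apply perm_skip, P|apply perm_swap].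
      * intros r [<-|Hr]; auto.
    + exists a, (b :: L'). split; [auto|].
      intros r Hr. apply (Permutation_in r P) in Hr.
      destruct Hr as [<-|Hr]; [lra|]. specialize (Hm r Hr). lra.
Qed.

Lemma kform_ge_lyap n : forall L, length L = n -> forall tau, (forall a, In a L -> t a <= tau) ->
  lyap al (mass L tau) (moment L tau) <= kform L.
Proof.
  induction n as [n IH] using lt_wf_ind. intros L HL tau Htau.
  destruct L as [|a0 L0]; [unfold lyap, mass, moment, kform; simpl; lra|].
  destruct (perm_max (a0 :: L0)) as [m [rest [P Hm]]]; [discriminate|].
  unfold mass, moment. rewrite (kform_perm _ _ P), !(lsum_perm _ _ _ P).
  fold (mass (m :: rest) tau) (moment (m :: rest) tau).
  assert (Hlen : (length rest < n)%nat)
    by (pose proof (Permutation_length P) as PL; simpl in PL, HL; lia).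
  assert (Hmt : t m <= tau) by (apply Htau, (Permutation_in _ (Permutation_sym P)); left; auto).
  specialize (IH _ Hlen rest eq_refl (t m) Hm).
  assert (Hcross : lsum (fun b => c b * kern al (Rabs (t m - t b))) rest =
                   mass rest (t m) + al * moment rest (t m)).
  { unfold mass, moment. rewrite <- lsum_scal, <- lsum_plus. apply lsum_ext. intros b Hb.
    specialize (Hm b Hb). rewrite Rabs_right by lra. unfold kern. ring. }
  assert (Hmass : mass (m :: rest) (t m) = c m + mass rest (t m))
    by (unfold mass; rewrite lsum_cons, Rminus_diag, Ropp_0, exp_0; ring).
  assert (Hmoment : moment (m :: rest) (t m) = moment rest (t m))
    by (unfold moment; rewrite lsum_cons, Rminus_diag; ring).
  rewrite kform_cons, Hcross.
  replace tau with (t m + (tau - t m)) by ring.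
  rewrite mass_shift, moment_shift, Hmass, Hmoment.
  eapply Rle_trans; [apply lyap_flow_le; auto; lra|].
  unfold lyap in *. nra.
Qed.

Lemma kform_nonneg L : 0 <= kform L.
Proof.
  set (tau := lsum (fun a => Rabs (t a)) L).
  assert (Htau : forall a, In a L -> t a <= tau).
  { intros a Ha. unfold tau. clear tau. induction L as [|b L IH]; [destruct Ha|].
    rewrite lsum_cons.
    assert (0 <= lsum (fun a => Rabs (t a)) L) by (apply lsum_nonneg; intros; apply Rabs_pos).
    destruct Ha as [<-|Ha].
    - pose proof (Rle_abs (t b)). lra.
    - specialize (IH Ha). pose proof (Rabs_pos (t b)). lra. }
  eapply Rle_trans; [apply (lyap_nonneg al (mass L tau) (moment L tau) Hal)|].
  exact (kform_ge_lyap _ L eq_refl tau Htau).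
Qed.

End KernelForm.

(* For w = r e^{iy}: den s r (cos y) = |1 - s w|^2,
   hval A s r (cos y) = Re (- log (1 - s w) + A s w / (1 - s w)),
   and hder is its derivative in s, Re (w / (1 - s w) + A w / (1 - s w)^2). *)
Definition den (s r c : R) := 1 - 2 * s * r * c + s ^ 2 * r ^ 2.
Definition hval (A s r c : R) :=
  - / 2 * ln (den s r c) + A * (s * r * c - s ^ 2 * r ^ 2) / den s r c.
Definition hder (A s r c : R) :=
  (r * c - s * r ^ 2) / den s r c
  + A * (r * c * (1 + s ^ 2 * r ^ 2) - 2 * s * r ^ 2) / den s r c ^ 2.

Lemma den_pos s r c : 0 <= s * r -> c <= 1 -> (s * r <> 1 \/ c < 1) -> 0 < den s r c.
Proof.
  intros Hsr Hc H. unfold den.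
  replace (1 - 2 * s * r * c + s ^ 2 * r ^ 2) with ((1 - s * r) ^ 2 + 2 * (s * r) * (1 - c))
    by ring.
  assert (0 <= 2 * (s * r) * (1 - c)) by (apply Rmult_le_pos; lra).
  destruct H as [H|H].
  - assert (0 < (1 - s * r) ^ 2).
    { rewrite <- Rsqr_pow2. apply Rsqr_pos_lt. lra. }
    lra.
  - assert (0 <= (1 - s * r) ^ 2) by apply pow2_ge_0.
    destruct (Req_dec (s * r) 0) as [E|E].
    + rewrite E. lra.
    + assert (0 < 2 * (s * r) * (1 - c)) by (apply Rmult_lt_0_compat; lra).
      lra.
Qed.

Lemma is_derive_hval A s r c :
  0 < den s r c -> is_derive (fun s => hval A s r c) s (hder A s r c).
Proof.
  intros HD. unfold hval, hder, den in *. auto_derive.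
  - repeat split; lra.
  - field. lra.
Qed.

Fixpoint sum1 (f : nat -> R) (n : nat) : R :=
  match n with O => 0 | S m => sum1 f m + f (S m) end.
Fixpoint Csum1 (f : nat -> Complex.C) (n : nat) : Complex.C :=
  match n with O => RtoC 0 | S m => Cplus (Csum1 f m) (f (S m)) end.

Lemma Csum1_S f n : Csum1 f (S n) = Cplus (Csum1 f n) (f (S n)).
Proof. reflexivity. Qed.

Lemma sum1_ext f g n : (forall k, f k = g k) -> sum1 f n = sum1 g n.
Proof. intros H; induction n; simpl; rewrite ?IHn, ?H; reflexivity. Qed.

Lemma sum1_plus f g n : sum1 (fun k => f k + g k) n = sum1 f n + sum1 g n.
Proof. induction n; simpl; lra. Qed.

Lemma sum1_scal a f n : sum1 (fun k => a * f k) n = a * sum1 f n.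
Proof. induction n; simpl; [|rewrite IHn]; ring. Qed.

Lemma sum1_nonneg f n : (forall k, 0 <= f k) -> 0 <= sum1 f n.
Proof. intros H; induction n; simpl; [lra|]. specialize (H (S n)). lra. Qed.

Lemma lsum_sum1 {T : Type} (F : T -> nat -> R) l n :
  lsum (fun a => sum1 (F a) n) l = sum1 (fun k => lsum (fun a => F a k) l) n.
Proof.
  induction n; simpl.
  - induction l; unfold lsum in *; simpl; lra.
  - rewrite lsum_plus, IHn. reflexivity.
Qed.

Lemma Re_Csum1 f n : Re (Csum1 f n) = sum1 (fun k => Re (f k)) n.
Proof. induction n; [reflexivity|]. rewrite Csum1_S, re_plus, IHn. reflexivity. Qed.

Lemma Re_Cminus a b : Re (Cminus a b) = Re a - Re b.
Proof. unfold Cminus. rewrite re_plus, re_opp. reflexivity. Qed.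

Lemma Re_Cdiv z v : Re (z / v) = (Re z * Re v + Im z * Im v) / (Re v ^ 2 + Im v ^ 2).
Proof. unfold Cdiv, Cinv, Cmult, Re, Im; simpl. unfold Rdiv. ring. Qed.

Definition Cpolar (r y : R) : Complex.C := (r * cos y, r * sin y).

Lemma Cpow_polar r y k :
  Cpow (Cpolar r y) k = (r ^ k * cos (INR k * y), r ^ k * sin (INR k * y)).
Proof.
  induction k.
  - simpl. rewrite Rmult_0_l, cos_0, sin_0. apply injective_projections; simpl; ring.
  - simpl Cpow. rewrite IHk. unfold Cpolar, Cmult. simpl fst; simpl snd.
    rewrite S_INR. replace ((INR k + 1) * y) with (y + INR k * y) by ring.
    rewrite cos_plus, sin_plus. apply injective_projections; simpl; ring.
Qed.

Section GeometricSums.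
Local Open Scope C_scope.
Variables s r y : R.
Let w := Cpolar r y.

(* Partial sums of the power series of w / (1 - s w) and w / (1 - s w)^2. *)
Definition geom_sum n := Csum1 (fun k => s ^ (k - 1) * w ^ k) n.
Definition geom_dsum n := Csum1 (fun k => INR k * s ^ (k - 1) * w ^ k) n.

Lemma geom_sum_telescope n : (1 - s * w) * geom_sum n = w - s ^ n * w ^ (S n).
Proof.
  unfold geom_sum. induction n.
  - simpl. ring.
  - rewrite Csum1_S, Cmult_plus_distr_l, IHn. cbv beta.
    rewrite Nat.sub_succ, Nat.sub_0_r. simpl Cpow. ring.
Qed.

Lemma geom_dsum_telescope n : (1 - s * w) ^ 2 * geom_dsum n =
  w - (INR n + 1)%R * s ^ n * w ^ (S n) + INR n * s ^ (S n) * w ^ (S (S n)).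
Proof.
  unfold geom_dsum. induction n.
  - simpl. rewrite Rplus_0_l. ring.
  - rewrite Csum1_S, Cmult_plus_distr_l, IHn. cbv beta.
    rewrite Nat.sub_succ, Nat.sub_0_r, S_INR, !RtoC_plus. simpl Cpow. ring.
Qed.

End GeometricSums.

Section GeometricBounds.
Variables s r y : R.
Hypothesis Hs : 0 <= s < 1.
Hypothesis Hr : 0 < r <= 1.
Let w := Cpolar r y.
Let u := Cminus 1 (Cmult s w).

Lemma Cmod_Cpolar : Cmod w = r.
Proof.
  unfold Cmod, w, Cpolar; simpl.
  match goal with |- sqrt ?e = _ => replace e with (r ^ 2) end.
  - apply sqrt_pow2; lra.
  - pose proof (sin2_cos2 y) as E. unfold Rsqr in E.
    replace (r ^ 2) with (r ^ 2 * (sin y * sin y + cos y * cos y)) by (rewrite E; ring).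
    ring.
Qed.

Lemma Cmod_u_sq : Cmod u ^ 2 = den s r (cos y).
Proof.
  rewrite Cmod2_alt. unfold den.
  pose proof (sin2_cos2 y) as E. unfold Rsqr in E.
  replace (s ^ 2 * r ^ 2) with (s ^ 2 * r ^ 2 * (sin y * sin y + cos y * cos y)) by (rewrite E; ring).
  unfold u, w, Cpolar, Re, Im; simpl. ring.
Qed.

Lemma Cmod_u_ge : 1 - s <= Cmod u.
Proof.
  assert (Hden : (1 - s * r) ^ 2 <= den s r (cos y)).
  { unfold den. pose proof (COS_bound y). assert (0 <= s * r) by nra. nra. }
  rewrite <- Cmod_u_sq in Hden. pose proof (Cmod_ge_0 u).
  assert (1 - s <= 1 - s * r) by nra. nra.
Qed.

Lemma u_neq0 : u <> RtoC 0.
Proof. apply Cmod_gt_0. pose proof Cmod_u_ge. lra. Qed.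

Let Hden : 0 < den s r (cos y).
Proof. rewrite <- Cmod_u_sq. apply pow_lt. pose proof Cmod_u_ge. lra. Qed.

Lemma Re_u : Re u = 1 - s * (r * cos y).
Proof. unfold u, w, Cpolar, Re; simpl. ring. Qed.

Lemma Im_u : Im u = - (s * (r * sin y)).
Proof. unfold u, w, Cpolar, Im; simpl. ring. Qed.

Lemma Re_w_div_u : Re (Cdiv w u) = (r * cos y - s * r ^ 2) / den s r (cos y).
Proof.
  rewrite Re_Cdiv, <- Cmod2_alt, Cmod_u_sq, Re_u, Im_u.
  change (Re w) with (r * cos y). change (Im w) with (r * sin y).
  pose proof (sin2_cos2 y) as E. unfold Rsqr in E.
  replace (s * r ^ 2) with (s * r ^ 2 * (sin y * sin y + cos y * cos y)) by (rewrite E; ring).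
  field. lra.
Qed.

Lemma Re_w_div_u_sq : Re (Cdiv w (Cpow u 2)) =
  (r * cos y * (1 + s ^ 2 * r ^ 2) - 2 * s * r ^ 2) / den s r (cos y) ^ 2.
Proof.
  rewrite Re_Cdiv, <- Cmod2_alt, Cmod_pow, <- pow_mult, (pow_mult (Cmod u) 2 2), Cmod_u_sq.
  assert (Re2 : Re (Cpow u 2) = Re u ^ 2 - Im u ^ 2) by (unfold Re, Im; simpl; ring).
  assert (Im2 : Im (Cpow u 2) = 2 * Re u * Im u) by (unfold Re, Im; simpl; ring).
  rewrite Re2, Im2, Re_u, Im_u.
  change (Re w) with (r * cos y). change (Im w) with (r * sin y).
  pose proof (sin2_cos2 y) as E. unfold Rsqr in E.
  replace (r * cos y * (1 + s ^ 2 * r ^ 2) - 2 * s * r ^ 2) with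
    (r * cos y - 2 * s * r ^ 2 * (sin y * sin y + cos y * cos y)
     + s ^ 2 * r ^ 3 * cos y * (sin y * sin y + cos y * cos y)) by (rewrite E; ring).
  field. lra.
Qed.

Lemma geom_sum_closed n :
  geom_sum s r y n = Cminus (Cdiv w u) (Cdiv (Cmult (Cpow s n) (Cpow w (S n))) u).
Proof.
  pose proof u_neq0 as Hu. pose proof (geom_sum_telescope s r y n) as E. fold w u in E.
  transitivity (Cdiv (Cmult u (geom_sum s r y n)) u); [field; exact Hu|].
  rewrite E. field. exact Hu.
Qed.

Lemma geom_dsum_closed n : geom_dsum s r y n = Cminus (Cdiv w (Cpow u 2))
  (Cdiv (Cminus (Cmult (INR n + 1)%R (Cmult (Cpow s n) (Cpow w (S n))))
                (Cmult (INR n) (Cmult (Cpow s (S n)) (Cpow w (S (S n)))))) (Cpow u 2)).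
Proof.
  pose proof u_neq0 as Hu. pose proof (geom_dsum_telescope s r y n) as E. fold w u in E.
  transitivity (Cdiv (Cmult (Cpow u 2) (geom_dsum s r y n)) (Cpow u 2)); [field; exact Hu|].
  rewrite E. field. exact Hu.
Qed.

Lemma Re_geom_sum n :
  Re (geom_sum s r y n) = sum1 (fun k => s ^ (k - 1) * r ^ k * cos (INR k * y)) n.
Proof.
  unfold geom_sum. rewrite Re_Csum1. apply sum1_ext. intros k.
  rewrite <- RtoC_pow, re_scal_l, Cpow_polar. unfold Re; simpl. ring.
Qed.

Lemma Re_geom_dsum n :
  Re (geom_dsum s r y n) = sum1 (fun k => INR k * s ^ (k - 1) * r ^ k * cos (INR k * y)) n.
Proof.
  unfold geom_dsum. rewrite Re_Csum1. apply sum1_ext. intros k.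
  rewrite <- RtoC_pow, <- RtoC_mult, re_scal_l, Cpow_polar. unfold Re; simpl. ring.
Qed.

Lemma Cmod_spow n : Cmod (Cpow s n) = s ^ n.
Proof. rewrite Cmod_pow, Cmod_R, Rabs_pos_eq; lra. Qed.

Lemma Cmod_wpow_le n : Cmod (Cpow w n) <= 1.
Proof.
  rewrite Cmod_pow, Cmod_Cpolar, <- (pow1 n). apply pow_incr. lra.
Qed.

Lemma Cmod_geom_sum_rem n :
  Cmod (Cdiv (Cmult (Cpow s n) (Cpow w (S n))) u) <= s ^ n / (1 - s).
Proof.
  rewrite Cmod_div by apply u_neq0. rewrite Cmod_mult, Cmod_spow.
  pose proof Cmod_u_ge. pose proof (Cmod_wpow_le (S n)). pose proof (Cmod_ge_0 (Cpow w (S n))).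
  assert (0 <= s ^ n) by (apply pow_le; lra).
  unfold Rdiv. apply Rmult_le_compat; try nra.
  - left; apply Rinv_0_lt_compat; lra.
  - apply Rinv_le_contravar; lra.
Qed.

Lemma Cmod_geom_dsum_rem n :
  Cmod (Cdiv (Cminus (Cmult (INR n + 1)%R (Cmult (Cpow s n) (Cpow w (S n))))
                     (Cmult (INR n) (Cmult (Cpow s (S n)) (Cpow w (S (S n)))))) (Cpow u 2))
  <= (2 * INR n + 1) * s ^ n / (1 - s) ^ 2.
Proof.
  rewrite Cmod_div by (apply Cpow_nz, u_neq0). rewrite Cmod_pow.
  pose proof (pos_INR n). assert (0 <= s ^ n) by (apply pow_le; lra).
  assert (Hnum : Cmod (Cminus (Cmult (INR n + 1)%R (Cmult (Cpow s n) (Cpow w (S n))))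
                   (Cmult (INR n) (Cmult (Cpow s (S n)) (Cpow w (S (S n))))))
                 <= (2 * INR n + 1) * s ^ n).
  { unfold Cminus. eapply Rle_trans; [apply Cmod_triangle|]. rewrite Cmod_opp.
    rewrite !Cmod_mult, !Cmod_R, !Cmod_spow, !Rabs_pos_eq by lra.
    pose proof (Cmod_wpow_le (S n)). pose proof (Cmod_wpow_le (S (S n))).
    pose proof (Cmod_ge_0 (Cpow w (S n))). pose proof (Cmod_ge_0 (Cpow w (S (S n)))).
    simpl (s ^ S n). assert (s * s ^ n <= s ^ n) by nra.
    assert ((INR n + 1) * (s ^ n * Cmod (Cpow w (S n))) <= (INR n + 1) * s ^ n)
      by (apply Rmult_le_compat_l; nra).
    assert (INR n * (s * s ^ n * Cmod (Cpow w (S (S n)))) <= INR n * s ^ n)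
      by (apply Rmult_le_compat_l; nra).
    lra. }
  pose proof Cmod_u_ge.
  assert (0 < (1 - s) ^ 2) by (apply pow_lt; lra).
  assert ((1 - s) ^ 2 <= Cmod u ^ 2) by (apply pow_incr; lra).
  unfold Rdiv. apply Rmult_le_compat; auto.
  - apply Cmod_ge_0.
  - left; apply Rinv_0_lt_compat; lra.
  - apply Rinv_le_contravar; lra.
Qed.

Lemma hder_sum1_bound A n :
  Rabs (hder A s r (cos y) - sum1 (fun k => s ^ (k - 1) * r ^ k * (1 + A * INR k) * cos (INR k * y)) n)
  <= (1 + 2 * Rabs A) * (INR n + 1) * s ^ n / (1 - s) ^ 2.
Proof.
  assert (Hsum : sum1 (fun k => s ^ (k - 1) * r ^ k * (1 + A * INR k) * cos (INR k * y)) n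
                 = Re (geom_sum s r y n) + A * Re (geom_dsum s r y n)).
  { rewrite Re_geom_sum, Re_geom_dsum, <- sum1_scal, <- sum1_plus. apply sum1_ext. intros; ring. }
  assert (Hh : hder A s r (cos y) = Re (Cdiv w u) + A * Re (Cdiv w (Cpow u 2))).
  { rewrite Re_w_div_u, Re_w_div_u_sq. unfold hder. field. lra. }
  rewrite Hsum, Hh, geom_sum_closed, geom_dsum_closed, !Re_Cminus. fold w u.
  set (R1 := Re (Cdiv (Cmult (Cpow s n) (Cpow w (S n))) u)).
  set (R2 := Re (Cdiv (Cminus (Cmult (INR n + 1)%R (Cmult (Cpow s n) (Cpow w (S n))))
                 (Cmult (INR n) (Cmult (Cpow s (S n)) (Cpow w (S (S n)))))) (Cpow u 2))).
  assert (B1 : Rabs R1 <= s ^ n / (1 - s))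
    by (eapply Rle_trans; [apply re_le_Cmod|apply Cmod_geom_sum_rem]).
  assert (B2 : Rabs R2 <= (2 * INR n + 1) * s ^ n / (1 - s) ^ 2)
    by (eapply Rle_trans; [apply re_le_Cmod|apply Cmod_geom_dsum_rem]).
  match goal with |- Rabs ?e <= _ => replace e with (R1 + A * R2) by ring end.
  eapply Rle_trans; [apply Rabs_triang|]. rewrite Rabs_mult.
  pose proof (pos_INR n). assert (0 <= s ^ n) by (apply pow_le; lra).
  assert (0 < (1 - s) ^ 2) by (apply pow_lt; lra).
  set (e := (INR n + 1) * s ^ n / (1 - s) ^ 2).
  assert (E1 : s ^ n / (1 - s) <= e).
  { unfold e. replace (s ^ n / (1 - s)) with (s ^ n * (1 - s) / (1 - s) ^ 2) by (field; lra).
    unfold Rdiv. apply Rmult_le_compat_r; [left; apply Rinv_0_lt_compat; lra|nra]. }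
  assert (E2 : (2 * INR n + 1) * s ^ n / (1 - s) ^ 2 <= 2 * e).
  { unfold e, Rdiv. assert (0 <= / (1 - s) ^ 2) by (left; apply Rinv_0_lt_compat; lra). nra. }
  assert (Rabs A * Rabs R2 <= Rabs A * (2 * e))
    by (apply Rmult_le_compat_l; [apply Rabs_pos|lra]).
  replace ((1 + 2 * Rabs A) * (INR n + 1) * s ^ n / (1 - s) ^ 2) with (e + Rabs A * (2 * e))
    by (unfold e; field; lra).
  lra.
Qed.

End GeometricBounds.

Section KeyInequality.
Variables s r c : R.
Hypothesis Hs : 0 <= s <= 1.
Hypothesis Hr : 0 < r <= 1.
Hypothesis Hc : -1 <= c <= 1.

Let a := 1 + s ^ 2 * r ^ 2.
Let b := 2 * s * r.
Let p := 1 - s * r ^ 2.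
Let q := (1 - s) * r.
Let K := (1 - r ^ 2) * (1 + s).
Let B := c * a - b.
Let M := a ^ 2 - b ^ 2.
Let P := a * p + q * b.

Let a_minus_b : a - b = (1 - s * r) ^ 2.
Proof. unfold a, b. ring. Qed.
Let a_plus_b : a + b = (1 + s * r) ^ 2.
Proof. unfold a, b. ring. Qed.
Let M_nonneg : 0 <= M.
Proof.
  unfold M. replace (a ^ 2 - b ^ 2) with ((a - b) * (a + b)) by ring.
  rewrite a_minus_b, a_plus_b. apply Rmult_le_pos; apply pow2_ge_0.
Qed.
Let P_nonneg : 0 <= P.
Proof.
  unfold P, a, p, q, b. assert (0 <= s * r) by nra. assert (s * r ^ 2 <= 1) by nra.
  apply Rplus_le_le_0_compat; apply Rmult_le_pos; nra.
Qed.

(* Multiplied by (a - b) a^2 (resp. (a + b) a^2), the slack of the inequality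
   is an explicit sum of nonnegative terms. *)
Lemma key_ineq_B_nonneg : 0 <= B -> K * B <= 2 * (a - b * c) * (p + q * c).
Proof.
  intros HB.
  set (G := (1 + r) ^ 2 * (1 - s) * (1 - s * r) ^ 2).
  assert (E : (a - b) * a ^ 2 * (2 * (a - b * c) * (p + q * c) - K * B) =
              (a - b - B) * 2 * M * P + B * a ^ 2 * G + 2 * b * q * B * (a - b - B) * (a - b))
    by (unfold G, M, P, B, K, q, p, b, a; ring).
  assert (HG : 0 <= G) by (unfold G; assert (0 <= (1 + r) ^ 2 * (1 - s)) by
    (apply Rmult_le_pos; [apply pow2_ge_0|lra]); apply Rmult_le_pos; [lra|apply pow2_ge_0]).
  assert (Hab : 0 <= a - b - B)
    by (replace (a - b - B) with (a * (1 - c)) by (unfold B; ring); unfold a; nra).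
  assert (0 <= b) by (unfold b; nra). assert (0 <= q) by (unfold q; nra).
  assert (Ha : 1 <= a) by (unfold a; nra).
  assert (Hrhs : 0 <= (a - b - B) * 2 * M * P + B * a ^ 2 * G + 2 * b * q * B * (a - b - B) * (a - b)).
  { assert (0 <= a - b) by (rewrite a_minus_b; apply pow2_ge_0).
    assert (0 <= (a - b - B) * 2 * M * P) by (repeat apply Rmult_le_pos; lra).
    assert (0 <= B * a ^ 2 * G) by (repeat apply Rmult_le_pos; try lra; nra).
    assert (0 <= 2 * b * q * B * (a - b - B) * (a - b)) by (repeat apply Rmult_le_pos; lra).
    lra. }
  destruct (Rle_lt_dec (a - b) 0) as [Hz|Hz].
  - rewrite a_minus_b in Hz. assert (s * r = 1) by nra.
    assert (r = 1) by nra. assert (s = 1) by nra.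
    unfold K, p, q. subst r s. lra.
  - assert (0 <= 2 * (a - b * c) * (p + q * c) - K * B); [|lra].
    apply (Rmult_le_reg_l ((a - b) * a ^ 2)); [apply Rmult_lt_0_compat; nra|]. nra.
Qed.

Lemma key_ineq_B_neg : B < 0 -> - (K * B) <= 2 * (a - b * c) * (p + q * c).
Proof.
  intros HB.
  set (G := (1 - r) ^ 2 * (1 - s) * (1 + s * r) ^ 2).
  assert (E : (a + b) * a ^ 2 * (2 * (a - b * c) * (p + q * c) + K * B) =
              (a + b + B) * 2 * M * P + (- B) * a ^ 2 * G + 2 * b * q * (- B) * (a + b + B) * (a + b))
    by (unfold G, M, P, B, K, q, p, b, a; ring).
  assert (HG : 0 <= G) by (unfold G; assert (0 <= (1 - r) ^ 2 * (1 - s)) by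
    (apply Rmult_le_pos; [apply pow2_ge_0|lra]); apply Rmult_le_pos; [lra|apply pow2_ge_0]).
  assert (Hab : 0 <= a + b + B)
    by (replace (a + b + B) with (a * (1 + c)) by (unfold B; ring); unfold a; nra).
  assert (0 <= b) by (unfold b; nra). assert (0 <= q) by (unfold q; nra).
  assert (Ha : 1 <= a) by (unfold a; nra).
  assert (Hrhs : 0 <= (a + b + B) * 2 * M * P + (- B) * a ^ 2 * G
                      + 2 * b * q * (- B) * (a + b + B) * (a + b)).
  { assert (0 <= a + b) by (rewrite a_plus_b; apply pow2_ge_0).
    assert (0 <= (a + b + B) * 2 * M * P) by (repeat apply Rmult_le_pos; lra).
    assert (0 <= (- B) * a ^ 2 * G) by (repeat apply Rmult_le_pos; try lra; nra).
    assert (0 <= 2 * b * q * (- B) * (a + b + B) * (a + b)) by (repeat apply Rmult_le_pos; lra).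
    lra. }
  assert (0 <= 2 * (a - b * c) * (p + q * c) + K * B); [|lra].
  apply (Rmult_le_reg_l ((a + b) * a ^ 2)).
  - rewrite a_plus_b. apply Rmult_lt_0_compat; [apply pow_lt; nra|nra].
  - nra.
Qed.

Lemma key_ineq : K * Rabs B <= 2 * (a - b * c) * (p + q * c).
Proof.
  destruct (Rle_lt_dec 0 B) as [HB|HB].
  - rewrite Rabs_pos_eq by exact HB. apply key_ineq_B_nonneg, HB.
  - rewrite Rabs_left by exact HB. rewrite <- Ropp_mult_distr_r. apply key_ineq_B_neg, HB.
Qed.

End KeyInequality.

(* The condition on A holds for A = alpha |x|, r = e^{-|x|}, since |x| <= sinh |x|. *)
Lemma hder_plus_inv_nonneg A s r c : 0 <= s <= 1 -> 0 < r <= 1 -> -1 <= c <= 1 ->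
  0 < den s r c -> Rabs A <= (/ r - r) / 2 -> 0 <= hder A s r c + / (1 + s).
Proof.
  intros Hs Hr Hc HD HA.
  pose proof (key_ineq s r c Hs Hr Hc) as Hkey.
  set (B := c * (1 + s ^ 2 * r ^ 2) - 2 * s * r) in *.
  set (N := 1 - s * r ^ 2 + (1 - s) * r * c) in *.
  assert (E : hder A s r c + / (1 + s) =
              (den s r c * N + A * r * B * (1 + s)) / (den s r c ^ 2 * (1 + s))).
  { unfold hder, N, B. unfold den in *. field. lra. }
  rewrite E. apply Rmult_le_pos; [|left; apply Rinv_0_lt_compat, Rmult_lt_0_compat;
                                   [apply pow_lt|]; lra].
  assert (HAr : Rabs A * r <= (1 - r ^ 2) / 2).
  { apply Rmult_le_compat_r with (r := r) in HA; [|lra].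
    replace ((/ r - r) / 2 * r) with ((1 - r ^ 2) / 2) in HA by (field; lra). exact HA. }
  assert (Habs : Rabs (A * r * B * (1 + s)) <= (1 - r ^ 2) * (1 + s) * Rabs B / 2).
  { rewrite !Rabs_mult, (Rabs_pos_eq r), (Rabs_pos_eq (1 + s)) by lra.
    replace ((1 - r ^ 2) * (1 + s) * Rabs B / 2) with ((1 - r ^ 2) / 2 * Rabs B * (1 + s)) by field.
    apply Rmult_le_compat_r; [lra|]. apply Rmult_le_compat_r; [apply Rabs_pos|exact HAr]. }
  pose proof (Rle_abs (- (A * r * B * (1 + s)))) as Hneg. rewrite Rabs_Ropp in Hneg.
  unfold den. nra.
Qed.

Lemma id_le_sinh L : 0 <= L -> L <= sinh L.
Proof.
  intros HL. unfold sinh.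
  set (f t := (exp t - exp (- t)) / 2 - t).
  assert (H : f 0 <= f L).
  { apply (le_of_is_derive_nonneg f (fun t => (exp t + exp (- t)) / 2 - 1)); auto.
    - intros x _. unfold f. auto_derive; auto. field.
    - intros x _. pose proof (exp_ineq1_le x). pose proof (exp_ineq1_le (- x)). lra. }
  unfold f in H. rewrite Ropp_0, exp_0 in H. lra.
Qed.

Lemma W_hval al x y : 0 < den 1 (exp (- Rabs x)) (cos y) ->
  W al x y = hval (al * Rabs x) 1 (exp (- Rabs x)) (cos y).
Proof.
  intros HD.
  set (L := Rabs x) in *. set (r := exp (- L)) in *. set (c := cos y) in *.
  assert (Hr : 0 < r) by apply exp_pos.
  assert (HeL : exp L = / r) by (unfold r; rewrite exp_Ropp, Rinv_inv; reflexivity).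
  assert (Hcosh : cosh x = (/ r + r) / 2).
  { unfold cosh, r, L in *. unfold Rabs in *. destruct (Rcase_abs x);
      rewrite <- HeL; rewrite ?Ropp_involutive; lra. }
  assert (Hxsinh : x * sinh x = L * (/ r - r) / 2).
  { unfold sinh, r, L in *. unfold Rabs in *. destruct (Rcase_abs x);
      rewrite <- HeL; rewrite ?Ropp_involutive; field. }
  assert (Hden : 2 * (cosh x - cos y) = den 1 r c / r)
    by (rewrite Hcosh; unfold den, c; field; lra).
  assert (Hln : ln (2 * (cosh x - cos y)) = ln (den 1 r c) + L).
  { rewrite Hden. unfold Rdiv. rewrite ln_mult, ln_Rinv by (auto; apply Rinv_0_lt_compat; auto).
    unfold r. rewrite ln_exp. ring. }
  unfold W. rewrite Hln.
  replace (al * x * sinh x) with (al * (x * sinh x)) by ring. rewrite Hxsinh.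
  replace (cosh x - cos y) with (den 1 r c / r / 2) by lra.
  fold L. unfold hval. unfold den in *. field. lra.
Qed.

Lemma exp_opp_bounds L : 0 <= L -> 0 < exp (- L) <= 1.
Proof.
  intros HL. split; [apply exp_pos|]. rewrite <- exp_0.
  destruct (Req_dec L 0) as [->|HL0]; [rewrite Ropp_0; lra|].
  left. apply exp_increasing. lra.
Qed.

(* t |-> hval (al * L) t r c + ln (1 + t) is nondecreasing on [s, 1]. *)
Lemma hval_le_hval1 al s L c : -1 <= al <= 1 -> 0 <= s < 1 -> 0 <= L -> -1 <= c <= 1 ->
  (exp (- L) < 1 \/ c < 1) ->
  hval (al * L) s (exp (- L)) c + ln ((1 + s) / 2) <= hval (al * L) 1 (exp (- L)) c.
Proof.
  intros Hal Hs HL Hc Hrc.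
  pose proof (exp_opp_bounds L HL) as Hr.
  set (r := exp (- L)) in *.
  assert (HA : Rabs (al * L) <= (/ r - r) / 2).
  { unfold r. rewrite exp_Ropp, Rinv_inv, <- exp_Ropp.
    rewrite Rabs_mult, (Rabs_pos_eq L) by lra.
    pose proof (id_le_sinh L HL). unfold sinh in *.
    assert (Rabs al <= 1) by (apply Rabs_le; lra).
    assert (0 <= Rabs al) by apply Rabs_pos. nra. }
  assert (HD : forall t, s <= t <= 1 -> 0 < den t r c).
  { intros t Ht. apply den_pos; [nra|lra|].
    destruct Hrc as [Hr1|Hc1]; [left; nra|right; exact Hc1]. }
  enough (hval (al * L) s r c + ln (1 + s) <= hval (al * L) 1 r c + ln (1 + 1)).
  { unfold Rdiv. rewrite ln_mult, ln_Rinv by lra. replace (1 + 1) with 2 in H by ring. lra. }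
  apply (le_of_is_derive_nonneg (fun t => hval (al * L) t r c + ln (1 + t))
                                (fun t => hder (al * L) t r c + / (1 + t))); [lra| |].
  - intros t Ht. apply (is_derive_plus (fun t => hval (al * L) t r c) (fun t => ln (1 + t))).
    + apply is_derive_hval, HD, Ht.
    + auto_derive; [lra|field; lra].
  - intros t Ht. apply hder_plus_inv_nonneg; auto; lra.
Qed.

Lemma is_lim_seq_succ_mul_geom s : Rabs s < 1 -> is_lim_seq (fun n => INR (S n) * s ^ n) 0.
Proof.
  intros Hs.
  assert (Hrad : CV_radius (fun _ => 1) = 1).
  { rewrite (CV_radius_finite_DAlembert _ 1); try lra.
    - rewrite Rinv_1. reflexivity.
    - intros _. lra.
    - apply is_lim_seq_ext with (fun _ => 1); [|apply is_lim_seq_const].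
      intros n. rewrite Rdiv_1_r, Rabs_R1. reflexivity. }
  assert (Hex : ex_pseries (PS_derive (fun _ => 1)) s)
    by (apply ex_pseries_derive; rewrite Hrad; exact Hs).
  apply ex_series_lim_0 in Hex.
  eapply is_lim_seq_ext; [|exact Hex].
  intros n. unfold PS_derive. rewrite pow_n_pow. change scal with Rmult. simpl. ring.
Qed.

Lemma nonneg_of_forall_ge_geom K s x : Rabs s < 1 ->
  (forall n, - K * (INR (S n) * s ^ n) <= x) -> 0 <= x.
Proof.
  intros Hs H.
  pose proof (is_lim_seq_scal_l _ (- K) _ (is_lim_seq_succ_mul_geom s Hs)) as Hlim.
  simpl in Hlim. rewrite Rmult_0_r in Hlim.
  exact (is_lim_seq_le _ (fun _ => x) 0 x H Hlim (is_lim_seq_const x)).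
Qed.

Lemma is_derive_lsum {T : Type} (F : T -> R -> R) (dF : T -> R) l x :
  (forall a, In a l -> is_derive (F a) x (dF a)) ->
  is_derive (fun t => lsum (fun a => F a t) l) x (lsum dF l).
Proof.
  induction l as [|a l IH]; intros H.
  - unfold lsum; simpl. auto_derive; auto.
  - apply (is_derive_plus (F a) (fun t => lsum (fun b => F b t) l));
      auto with datatypes.
Qed.

Lemma exp_pow a k : exp a ^ k = exp (INR k * a).
Proof.
  induction k; simpl pow; [rewrite Rmult_0_l, exp_0; reflexivity|].
  rewrite IHk, S_INR, <- exp_plus. f_equal. ring.
Qed.

Definition hpair (al s : R) (z z' : R * R) :=
  hval (al * Rabs (fst z - fst z')) s (exp (- Rabs (fst z - fst z'))) (cos (snd z - snd z')).
Definition dhpair (al s : R) (z z' : R * R) :=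
  hder (al * Rabs (fst z - fst z')) s (exp (- Rabs (fst z - fst z'))) (cos (snd z - snd z')).

(* The k-th coefficient of the expansion of [dhpair] in powers of s. *)
Definition dhpair_coef (al s : R) (z z' : R * R) (k : nat) :=
  s ^ (k - 1) * exp (- Rabs (fst z - fst z')) ^ k
  * (1 + al * Rabs (fst z - fst z') * INR k) * cos (INR k * (snd z - snd z')).

Definition dhpair_err (al s : R) (z z' : R * R) :=
  (1 + 2 * Rabs (al * Rabs (fst z - fst z'))) / (1 - s) ^ 2.

Section PairSums.
Variable al : R.
Hypothesis Hal : -1 <= al <= 1.

Lemma dhpair_coef_sum_nonneg (w : list (R * R)) s k : 0 <= s ->
  0 <= lsum (fun z => lsum (fun z' => dhpair_coef al s z z' k) w) w.
Proof.
  intros Hs.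
  set (t (z : R * R) := INR k * fst z).
  pose proof (kform_nonneg t (fun z => cos (INR k * snd z)) al Hal w) as Qcos.
  pose proof (kform_nonneg t (fun z => sin (INR k * snd z)) al Hal w) as Qsin.
  unfold kform in Qcos, Qsin.
  rewrite (lsum_ext _ (fun z => s ^ (k - 1) *
      (lsum (fun z' => cos (INR k * snd z) * cos (INR k * snd z') * kern al (Rabs (t z - t z'))) w
       + lsum (fun z' => sin (INR k * snd z) * sin (INR k * snd z') * kern al (Rabs (t z - t z'))) w))).
  - rewrite lsum_scal, lsum_plus. apply Rmult_le_pos; [apply pow_le; exact Hs|lra].
  - intros z _. rewrite <- lsum_plus, <- lsum_scal. apply lsum_ext. intros z' _.
    unfold dhpair_coef, kern, t.
    replace (INR k * fst z - INR k * fst z') with (INR k * (fst z - fst z')) by ring.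
    rewrite Rabs_mult, (Rabs_pos_eq (INR k)) by apply pos_INR.
    replace (INR k * (snd z - snd z')) with (INR k * snd z - INR k * snd z') by ring.
    rewrite cos_minus, exp_pow.
    replace (INR k * - Rabs (fst z - fst z')) with (- (INR k * Rabs (fst z - fst z'))) by ring.
    ring.
Qed.

Lemma dhpair_ge_sum1 s z z' n : 0 <= s < 1 ->
  sum1 (dhpair_coef al s z z') n - dhpair_err al s z z' * (INR (S n) * s ^ n)
  <= dhpair al s z z'.
Proof.
  intros Hs.
  pose proof (exp_opp_bounds _ (Rabs_pos (fst z - fst z'))) as Hr.
  pose proof (hder_sum1_bound s _ (snd z - snd z') Hs Hr (al * Rabs (fst z - fst z')) n) as Hb.
  rewrite (sum1_ext _ (dhpair_coef al s z z')) in Hb by (intros; unfold dhpair_coef; ring).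
  fold (dhpair al s z z') in Hb.
  pose proof (Rle_abs (- (dhpair al s z z' - sum1 (dhpair_coef al s z z') n))) as Habs.
  rewrite Rabs_Ropp in Habs. unfold dhpair_err. rewrite S_INR. unfold Rdiv in *. lra.
Qed.

Lemma dhpair_sum_nonneg (w : list (R * R)) s : 0 <= s < 1 ->
  0 <= lsum (fun z => lsum (fun z' => dhpair al s z z') w) w.
Proof.
  intros Hs.
  apply (nonneg_of_forall_ge_geom (lsum (fun z => lsum (fun z' => dhpair_err al s z z') w) w) s);
    [rewrite Rabs_pos_eq; lra|].
  intros n. set (e := INR (S n) * s ^ n).
  assert (Hcoef : 0 <= sum1 (fun k => lsum (fun z => lsum (fun z' => dhpair_coef al s z z' k) w) w) n)
    by (apply sum1_nonneg; intros k; apply dhpair_coef_sum_nonneg; lra).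
  rewrite <- lsum_sum1 in Hcoef.
  rewrite (lsum_ext _ (fun z => lsum (fun z' => sum1 (dhpair_coef al s z z') n) w)) in Hcoef
    by (intros; symmetry; apply lsum_sum1).
  eapply Rle_trans; [|apply lsum_le; intros z _; apply lsum_le; intros z' _;
                      apply (dhpair_ge_sum1 s z z' n Hs)].
  fold e.
  rewrite (lsum_ext (fun z => lsum (fun z' => sum1 (dhpair_coef al s z z') n
                                               - dhpair_err al s z z' * e) w)
                    (fun z => lsum (fun z' => sum1 (dhpair_coef al s z z') n) w
                                        - e * lsum (fun z' => dhpair_err al s z z') w)).
  - rewrite lsum_minus, lsum_scal. lra.
  - intros z _. rewrite <- lsum_scal, <- lsum_minus. apply lsum_ext. intros. ring.
Qed.

Lemma hpair_sum_nonneg (w : list (R * R)) s : 0 <= s < 1 ->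
  0 <= lsum (fun z => lsum (fun z' => hpair al s z z') w) w.
Proof.
  intros Hs.
  set (H t := lsum (fun z => lsum (fun z' => hpair al t z z') w) w).
  assert (H0 : H 0 = 0).
  { unfold H. rewrite (lsum_ext _ (fun _ => 0)); [rewrite lsum_const; ring|].
    intros z _. rewrite (lsum_ext _ (fun _ => 0)); [rewrite lsum_const; ring|].
    intros z' _. unfold hpair, hval, den.
    match goal with |- context [ln ?d] => replace d with 1 by ring end.
    rewrite ln_1. field. }
  rewrite <- H0.
  apply (le_of_is_derive_nonneg H (fun t => lsum (fun z => lsum (fun z' => dhpair al t z z') w) w));
    [lra| |].
  - intros t Ht. apply (is_derive_lsum (fun z t => lsum (fun z' => hpair al t z z') w)).
    intros z _. apply (is_derive_lsum (fun z' t => hpair al t z z')). intros z' _.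
    apply is_derive_hval.
    pose proof (exp_opp_bounds _ (Rabs_pos (fst z - fst z'))).
    apply den_pos; [nra|apply COS_bound|left; nra].
  - intros t Ht. apply dhpair_sum_nonneg. lra.
Qed.

End PairSums.

Lemma cos_lt_1 t : - (2 * PI) < t < 2 * PI -> t <> 0 -> cos t < 1.
Proof.
  intros Ht Hn. replace t with (2 * (t / 2)) by field. rewrite cos_2a_sin.
  assert (sin (t / 2) <> 0).
  { pose proof PI_RGT_0. destruct (Rlt_le_dec 0 t).
    - apply Rgt_not_eq, sin_gt_0; lra.
    - replace (t / 2) with (- (- t / 2)) by field. rewrite sin_neg.
      assert (0 < sin (- t / 2)) by (apply sin_gt_0; lra). lra. }
  assert (0 < sin (t / 2) * sin (t / 2)) by (apply Rsqr_pos_lt; auto). lra.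
Qed.

Lemma ln_le_sub_1 x : 0 < x -> ln x <= x - 1.
Proof. intros Hx. pose proof (exp_ineq1_le (ln x)). rewrite exp_ln in H by exact Hx. lra. Qed.

Definition neqb (z z' : R * R) : bool :=
  if Req_EM_T (fst z) (fst z') then
    if Req_EM_T (snd z) (snd z') then false else true
  else true.

Lemma neqb_false z z' : neqb z z' = false <-> z = z'.
Proof.
  destruct z as [a b], z' as [a' b']. unfold neqb; simpl.
  destruct (Req_EM_T a a'), (Req_EM_T b b'); split; intros H; subst;
    try congruence; injection H; intros; contradiction.
Qed.

Lemma filter_neqb_perm z w : NoDup w -> In z w -> Permutation w (z :: filter (neqb z) w).
Proof.
  induction w as [|a w IH]; intros Hnd Hin; [destruct Hin|].
  inversion Hnd as [|? ? Ha Hw]; subst. simpl.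
  destruct (neqb z a) eqn:E.
  - destruct Hin as [<-|Hin]; [rewrite (proj2 (neqb_false a a) eq_refl) in E; discriminate|].
    eapply perm_trans; [apply perm_skip, IH; assumption|apply perm_swap].
  - apply neqb_false in E. subst a. apply perm_skip.
    rewrite forallb_filter_id; [reflexivity|].
    apply forallb_forall. intros z' Hz'. destruct (neqb z z') eqn:E; [reflexivity|].
    apply neqb_false in E. subst. contradiction.
Qed.

Section PairSumBound.
Variable al : R.
Hypothesis Hal : -1 <= al <= 1.

Lemma Wpt_ge_hpair s z z' : 0 <= s < 1 -> in_strip z -> in_strip z' -> z <> z' ->
  hpair al s z z' + ln ((1 + s) / 2) <= Wpt al z z'.
Proof.
  intros Hs Hz Hz' Hne. unfold in_strip in *.
  set (L := Rabs (fst z - fst z')).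
  pose proof (exp_opp_bounds L (Rabs_pos _)) as Hr.
  pose proof (COS_bound (snd z - snd z')) as Hc.
  assert (Hrc : exp (- L) < 1 \/ cos (snd z - snd z') < 1).
  { destruct (Req_dec (fst z - fst z') 0) as [E|E].
    - right. apply cos_lt_1; [pose proof PI_RGT_0; lra|].
      intros E2. apply Hne. destruct z, z'; simpl in *. f_equal; lra.
    - left. rewrite <- exp_0. apply exp_increasing. pose proof (Rabs_pos_lt _ E). unfold L. lra. }
  unfold Wpt. rewrite W_hval; fold L.
  - unfold hpair. fold L. apply hval_le_hval1; auto. apply Rabs_pos.
  - apply den_pos; [lra|lra|]. destruct Hrc; [left; apply Rlt_not_eq|right]; lra.
Qed.

Lemma hpair_diag s z : 0 <= s < 1 -> hpair al s z z = - ln (1 - s).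
Proof.
  intros Hs. unfold hpair, hval, den.
  rewrite !Rminus_diag, Rabs_R0, Ropp_0, exp_0, cos_0.
  replace (1 - 2 * s * 1 * 1 + s ^ 2 * 1 ^ 2) with ((1 - s) * (1 - s)) by ring.
  rewrite ln_mult by lra. field. lra.
Qed.

Lemma pair_sum_ge (w : list (R * R)) s : 0 <= s < 1 -> NoDup w ->
  (forall z, In z w -> in_strip z) ->
  INR (length w) * ln (1 - s) + INR (length w) * (INR (length w) - 1) * ln ((1 + s) / 2)
  <= pair_sum al w.
Proof.
  intros Hs Hnd Hstrip.
  set (N := length w). set (l := ln ((1 + s) / 2)).
  unfold pair_sum. rewrite fold_right_Rplus_map.
  rewrite (lsum_ext _ (fun z => lsum (fun z' => Wpt al z z') (filter (neqb z) w)))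
    by (intros; apply fold_right_Rplus_map).
  eapply Rle_trans; [|apply lsum_le; intros z Hz; apply lsum_le; intros z' Hz';
    apply filter_In in Hz' as [Hz'w Hneq];
    apply (Wpt_ge_hpair s z z'); auto;
    intros E; subst z'; rewrite (proj2 (neqb_false z z) eq_refl) in Hneq; discriminate].
  rewrite (lsum_ext _ (fun z => lsum (hpair al s z) w + ln (1 - s) + (INR N - 1) * l)).
  - rewrite !lsum_plus, !lsum_const. fold N.
    pose proof (hpair_sum_nonneg al Hal w s Hs) as Hpos.
    change (0 <= lsum (fun z => lsum (hpair al s z) w) w) in Hpos. lra.
  - intros z Hz. pose proof (filter_neqb_perm z w Hnd Hz) as P.
    rewrite lsum_plus, lsum_const, (lsum_perm _ _ _ P), lsum_cons, hpair_diag by exact Hs.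
    apply Permutation_length in P. simpl in P. fold N in P. rewrite P, S_INR. unfold l. ring.
Qed.

End PairSumBound.

(* With s = 1 - 2/n, i.e. 1 - s = 2/n and (1 + s)/2 = 1 - 1/n. *)
Lemma optimal_s_bound n : 2 <= n ->
  - n * (ln n + (1 - ln 2)) <= n * ln (2 / n) + n * (n - 1) * ln (1 - 1 / n).
Proof.
  intros Hn.
  assert (Hl : - (1 / (n - 1)) <= ln (1 - 1 / n)).
  { replace (1 - 1 / n) with (/ (n / (n - 1))) by (field; lra).
    rewrite ln_Rinv by (apply Rdiv_lt_0_compat; lra).
    pose proof (ln_le_sub_1 (n / (n - 1)) ltac:(apply Rdiv_lt_0_compat; lra)).
    replace (n / (n - 1) - 1) with (1 / (n - 1)) in H by (field; lra). lra. }
  assert (Hmul : - n <= n * (n - 1) * ln (1 - 1 / n)).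
  { replace (- n) with (n * (n - 1) * - (1 / (n - 1))) by (field; lra).
    apply Rmult_le_compat_l; [nra|exact Hl]. }
  unfold Rdiv at 1. rewrite ln_mult, ln_Rinv by (try apply Rinv_0_lt_compat; lra).
  lra.
Qed.

Theorem proposition2 (alpha : R) (N : nat) (w : list (R * R)) :
  -1 <= alpha <= 1 ->
  (1 <= N)%nat ->
  NoDup w -> length w = N ->
  (forall z, In z w -> in_strip z) ->
  pair_sum alpha w >= - INR N * (ln (INR N) + (1 - ln 2)).
Proof.
  intros Hal HN Hnd Hlen Hstrip.
  pose proof (ln_le_sub_1 2 ltac:(lra)) as Hln2.
  destruct (Nat.eq_dec N 1) as [->|HN2].
  - pose proof (pair_sum_ge alpha Hal w 0 ltac:(lra) Hnd Hstrip) as H.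
    rewrite Hlen in H. simpl INR in *. rewrite Rminus_0_r, ln_1 in *. lra.
  - assert (Hn : 2 <= INR N) by (apply (le_INR 2); lia).
    pose proof (pair_sum_ge alpha Hal w (1 - 2 / INR N)) as H.
    rewrite Hlen in H.
    replace (1 - (1 - 2 / INR N)) with (2 / INR N) in H by ring.
    replace ((1 + (1 - 2 / INR N)) / 2) with (1 - 1 / INR N) in H by (field; lra).
    pose proof (optimal_s_bound (INR N) Hn).
    apply Rle_ge, (Rle_trans _ _ _ H0), H; auto.
    split; [|assert (0 < 2 / INR N) by (apply Rdiv_lt_0_compat; lra); lra].
    apply (Rmult_le_reg_r (INR N)); [lra|]. field_simplify; lra.
Qed.
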